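(* Let $K\subset\mathbb{R}^3$ be finite, and let $(A^j)$ be the sequence of sets produced by the finitely extremal points elimination algorithm applied to $K$. Then for every $j$, every extremal point of $M^j=(A^j)^{hv}$ is a finitely extremal point of $A^j$.
   Context: Grid: let $F\subset\mathbb{R}^2$ be the projection of $K$ to the $(x,y)$-plane and $H$ the set of $z$-coordinates of points of $K$. The first derived set $F^1$ is the set of points of $\mathbb{R}^2\setminus F$ that are the single intersection point of two segments with endpoints in $F$. The grid is $G=(F\cup F^1)\times H$. hv-hull: for finite $A\subset\mathbb{R}^3$ with set of heights $h_1<\dots<h_m$ and $\pi$ the projection to the $(x,y)$-plane, $A^{h}=\bigcup_i co(A\cap\{z=h_i\})$ and $A^{hv}=A^h\cup\bigcup_{j}\big(\pi(co(A\cap\{z=h_j\}))\cap\pi(co(A\cap\{z=h_{j+1}\}))\big)\times[h_j,h_{j+1}]$. Finitely extremal: for finite $A$, a point $p\in A$ is $A$-finitely extremal if neither (i) there are $p_1,p_2\in A$ on the same vertical line (parallel to the $z$ axis) with $p$ in the relative interior of $[p_1,p_2]$, nor (ii) $p$ lies in the convex hull of $\{q\in A\setminus\{p\}: z(q)=z(p)\}$. Algorithm: set $A^0=G$; while the set of finitely extremal points of $A^k$ is not contained in $K$, choose a finitely extremal point $p_k$ of $A^k$ with $p_k\notin K$ and set $A^{k+1}=A^k\setminus\{p_k\}$. For $M\subset\mathbb{R}^3$, $p\in M$ is extremal if no relatively open horizontal (contained in a plane $\{z=c\}$) or vertical segment contained in $M$ contains $p$. *)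

From Stdlib Require Import Reals List.
Open Scope R_scope.

Definition pt2 : Type := (R * R)%type.
Definition pt3 : Type := (pt2 * R)%type.

Definition proj (p : pt3) : pt2 := fst p.
Definition zc (p : pt3) : R := snd p.

Definition finite3 (K : pt3 -> Prop) : Prop :=
  exists l : list pt3, forall p, K p -> In p l.

Definition seg2 (a b q : pt2) : Prop :=
  exists t, 0 <= t <= 1 /\
    fst q = fst a + t * (fst b - fst a) /\ snd q = snd a + t * (snd b - snd a).

Definition Fset (K : pt3 -> Prop) (q : pt2) : Prop := exists p, K p /\ proj p = q.
Definition Hset (K : pt3 -> Prop) (h : R) : Prop := exists p, K p /\ zc p = h.

Definition F1set (K : pt3 -> Prop) (q : pt2) : Prop :=
  ~ Fset K q /\
  exists a b c d, Fset K a /\ Fset K b /\ Fset K c /\ Fset K d /\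
    (forall r, (seg2 a b r /\ seg2 c d r) <-> r = q).

Definition grid (K : pt3 -> Prop) (p : pt3) : Prop :=
  (Fset K (proj p) \/ F1set K (proj p)) /\ Hset K (zc p).

Definition conv2 (S : pt2 -> Prop) (q : pt2) : Prop :=
  exists l : list (R * pt2),
    Forall (fun wa => 0 <= fst wa /\ S (snd wa)) l /\
    fold_right (fun wa acc => fst wa + acc) 0 l = 1 /\
    fold_right (fun wa acc => fst wa * fst (snd wa) + acc) 0 l = fst q /\
    fold_right (fun wa acc => fst wa * snd (snd wa) + acc) 0 l = snd q.

Definition slice (A : pt3 -> Prop) (h : R) (q : pt2) : Prop := A (q, h).

Definition consecutive_heights (A : pt3 -> Prop) (h h' : R) : Prop :=
  Hset A h /\ Hset A h' /\ h < h' /\ ~ (exists h'', Hset A h'' /\ h < h'' < h').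

Definition hv_hull (A : pt3 -> Prop) (p : pt3) : Prop :=
  conv2 (slice A (zc p)) (proj p) \/
  exists h h', consecutive_heights A h h' /\ h <= zc p <= h' /\
    conv2 (slice A h) (proj p) /\ conv2 (slice A h') (proj p).

Definition fin_extremal (A : pt3 -> Prop) (p : pt3) : Prop :=
  A p /\
  ~ (exists p1 p2, A p1 /\ A p2 /\ proj p1 = proj p /\ proj p2 = proj p /\
       zc p1 < zc p < zc p2) /\
  ~ conv2 (fun q => A (q, zc p) /\ (q, zc p) <> p) (proj p).

Definition lerp3 (a b : pt3) (t : R) : pt3 :=
  ((fst (proj a) + t * (fst (proj b) - fst (proj a)),
    snd (proj a) + t * (snd (proj b) - snd (proj a))),
   zc a + t * (zc b - zc a)).

Definition extremal (M : pt3 -> Prop) (p : pt3) : Prop :=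
  M p /\
  ~ (exists a b, a <> b /\ (zc a = zc b \/ proj a = proj b) /\
       (forall t, 0 < t < 1 -> M (lerp3 a b t)) /\
       (exists t, 0 < t < 1 /\ p = lerp3 a b t)).

(* The sets A^j reachable by the finitely extremal points elimination
   algorithm applied to K (over all possible choices of p_k). *)
Inductive alg_set (K : pt3 -> Prop) : (pt3 -> Prop) -> Prop :=
| alg_init : alg_set K (grid K)
| alg_next (A : pt3 -> Prop) (p : pt3) :
    alg_set K A ->
    ~ (forall q, fin_extremal A q -> K q) ->
    fin_extremal A p -> ~ K p ->
    alg_set K (fun q => A q /\ q <> p).

From Stdlib Require Import Reals List Lra Classical.
Open Scope R_scope.

(* An extremal point p = (q, z) of A^hv is not inside a vertical segment of
   A^hv, so it lies in co(A ∩ {z}); nor inside a horizontal one, and a point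
   of a planar convex hull that is not one of the generators is inside such a
   segment: hence p ∈ A and p ∉ co((A ∩ {z}) \ {p}).  For condition (i), the
   algorithm keeps A vertically convex relative to its own heights (a point
   removed between two points of A on its vertical line would not be finitely
   extremal).  So if p had points of A below and above it, the nearest heights
   h < z < h' of A would carry points of A over q, and {q} × [h, h'] ⊂ A^hv
   would be a vertical segment through p. *)

Definition mass (l : list (R * pt2)) : R := fold_right (fun wa acc => fst wa + acc) 0 l.

Definition wsum (f : pt2 -> R) (l : list (R * pt2)) : R :=
  fold_right (fun wa acc => fst wa * f (snd wa) + acc) 0 l.

Definition rescale (c : R) (l : list (R * pt2)) : list (R * pt2) :=
  map (fun wa => (c * fst wa, snd wa)) l.

Definition weighted_in (S : pt2 -> Prop) (l : list (R * pt2)) : Prop :=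
  Forall (fun wa => 0 <= fst wa /\ S (snd wa)) l.

Definition lerp2 (a b : pt2) (t : R) : pt2 :=
  (fst a + t * (fst b - fst a), snd a + t * (snd b - snd a)).

Lemma conv2E S q : conv2 S q <-> exists l,
  weighted_in S l /\ mass l = 1 /\ wsum fst l = fst q /\ wsum snd l = snd q.
Proof. apply iff_refl. Qed.

Lemma mass_cons wa l : mass (wa :: l) = fst wa + mass l.
Proof. reflexivity. Qed.

Lemma wsum_cons f wa l : wsum f (wa :: l) = fst wa * f (snd wa) + wsum f l.
Proof. reflexivity. Qed.

Lemma mass_rescale c l : mass (rescale c l) = c * mass l.
Proof. induction l as [|wa l IH]; simpl; [ring|]. rewrite IH; ring. Qed.

Lemma wsum_rescale c f l : wsum f (rescale c l) = c * wsum f l.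
Proof. induction l as [|wa l IH]; simpl; [ring|]. rewrite IH; ring. Qed.

Lemma weighted_in_rescale c S l :
  0 <= c -> weighted_in S l -> weighted_in S (rescale c l).
Proof.
  intros Hc Hl; apply Forall_map.
  eapply Forall_impl; [|exact Hl]; simpl; intros wa [Hw Ha]; split; [nra|exact Ha].
Qed.

Lemma mass_ge0 S l : weighted_in S l -> 0 <= mass l.
Proof. induction 1 as [|wa l [Hw _] _ IH]; simpl; lra. Qed.

Lemma wsum_mass0 S f l : weighted_in S l -> mass l = 0 -> wsum f l = 0.
Proof.
  induction 1 as [|wa l [Hw _] Hl IH]; simpl; intros Hm; [reflexivity|].
  pose proof (mass_ge0 S l Hl).
  assert (Hw0 : fst wa = 0) by lra.
  rewrite Hw0, IH by lra; ring.
Qed.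

Lemma conv2_single (S : pt2 -> Prop) q : S q -> conv2 S q.
Proof.
  intros Sq; apply conv2E; exists ((1, q) :: nil); simpl.
  repeat split; try ring. repeat constructor; simpl; [lra|exact Sq].
Qed.

Lemma conv2_mono (S S' : pt2 -> Prop) q :
  (forall u, S u -> S' u) -> conv2 S q -> conv2 S' q.
Proof.
  intros HS [l [Hl Hq]]; exists l; split; [|exact Hq].
  eapply Forall_impl; [|exact Hl]; simpl; intros wa [Hw Ha]; auto.
Qed.

Lemma conv2_lerp (S : pt2 -> Prop) a r t :
  S a -> conv2 S r -> 0 <= t <= 1 -> conv2 S (lerp2 a r t).
Proof.
  intros Sa Hr Ht; rewrite conv2E in Hr; destruct Hr as [l [Hl [Hm [Hx Hy]]]].
  apply conv2E; exists ((1 - t, a) :: rescale t l).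
  rewrite mass_cons, !wsum_cons, mass_rescale, !wsum_rescale, Hm, Hx, Hy; simpl.
  repeat split; try ring.
  constructor; [simpl; split; [lra|exact Sa]|].
  apply weighted_in_rescale; [lra|exact Hl].
Qed.

Lemma conv2_peel (S : pt2 -> Prop) q : conv2 S q -> ~ S q ->
  exists a r t, S a /\ conv2 S r /\ 0 < t < 1 /\ q = lerp2 a r t.
Proof.
  intros Hq NSq; rewrite conv2E in Hq; destruct Hq as [l [Hl Hq]]; revert q NSq Hq.
  induction Hl as [|[w a] l [Hw Sa] Hl IH];
    intros [qx qy] NSq [Hm [Hx Hy]]; [simpl in Hm; lra|].
  rewrite mass_cons in Hm; rewrite wsum_cons in Hx, Hy; simpl in *.
  pose proof (mass_ge0 S l Hl) as Hs.
  destruct (Req_dec w 0) as [Hw0|Hw0].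
  { subst w; apply IH; [exact NSq|]; simpl; repeat split; lra. }
  destruct (Req_dec (mass l) 0) as [Hs0|Hs0].
  { exfalso; apply NSq.
    rewrite (wsum_mass0 S fst l), (wsum_mass0 S snd l) in * by assumption.
    replace qx with (fst a) by nra; replace qy with (snd a) by nra.
    destruct a; exact Sa. }
  set (s := mass l) in *.
  exists a, (wsum fst l / s, wsum snd l / s), s.
  repeat split; [exact Sa| |lra|lra|].
  - apply conv2E; exists (rescale (/ s) l).
    rewrite mass_rescale, !wsum_rescale; simpl; repeat split.
    + apply weighted_in_rescale; [left; apply Rinv_0_lt_compat; lra|exact Hl].
    + fold s; field; lra.
    + unfold Rdiv; ring.
    + unfold Rdiv; ring.
  - unfold lerp2; simpl; rewrite <- Hx, <- Hy; replace w with (1 - s) by lra.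
    f_equal; field; exact Hs0.
Qed.

Lemma lerp2_same a t : lerp2 a a t = a.
Proof. destruct a as [x y]; unfold lerp2; simpl; f_equal; ring. Qed.

Lemma lerp3_horizontal a b z t : lerp3 (a, z) (b, z) t = (lerp2 a b t, z).
Proof.
  unfold lerp3, zc; simpl; replace (z + t * (z - z)) with z by ring; reflexivity.
Qed.

Lemma lerp3_vertical q h h' t : lerp3 (q, h) (q, h') t = (q, h + t * (h' - h)).
Proof.
  destruct q as [x y]; unfold lerp3, proj, zc; simpl.
  replace (x + t * (x - x)) with x by ring; replace (y + t * (y - y)) with y by ring.
  reflexivity.
Qed.

Lemma extremal_not_vertical M q z h h' : extremal M (q, z) -> h < z < h' ->
  ~ (forall u, h <= u <= h' -> M (q, u)).
Proof.
  intros [_ Hno] Hz HM; apply Hno; exists (q, h), (q, h'); repeat split.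
  - intros E; injection E; lra.
  - right; reflexivity.
  - intros t Ht; rewrite lerp3_vertical; apply HM; nra.
  - set (t := (z - h) / (h' - h)).
    assert (Et : t * (h' - h) = z - h) by (unfold t; field; lra).
    exists t; split; [split; nra|].
    rewrite lerp3_vertical, Et; f_equal; ring.
Qed.

Lemma extremal_conv2_mem M (S : pt2 -> Prop) q z : extremal M (q, z) ->
  conv2 S q -> (forall u, conv2 S u -> M (u, z)) -> S q.
Proof.
  intros [_ Hno] Hq HM; apply NNPP; intros NSq.
  destruct (conv2_peel S q Hq NSq) as [a [r [t [Sa [Hr [Ht ->]]]]]].
  apply Hno; exists (a, z), (r, z); repeat split.
  - intros E; injection E as <-; apply NSq; rewrite lerp2_same; exact Sa.
  - left; reflexivity.
  - intros s Hs; rewrite lerp3_horizontal; apply HM, conv2_lerp; auto; lra.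
  - exists t; split; [exact Ht|]; rewrite lerp3_horizontal; reflexivity.
Qed.

Lemma hv_hull_column A q h h' : consecutive_heights A h h' ->
  A (q, h) -> A (q, h') -> forall u, h <= u <= h' -> hv_hull A (q, u).
Proof.
  intros Hc Ah Ah' u Hu; right; exists h, h'; simpl.
  split; [exact Hc|split; [exact Hu|split; apply conv2_single; assumption]].
Qed.

Lemma extremal_hv_hull_slice A q z :
  extremal (hv_hull A) (q, z) -> conv2 (slice A z) q.
Proof.
  intros Hp; destruct (proj1 Hp) as [Hq|[h [h' [Hc [Hz [Hh Hh']]]]]]; [exact Hq|].
  simpl in Hz.
  destruct (Req_dec z h) as [->|Nh]; [exact Hh|].
  destruct (Req_dec z h') as [->|Nh']; [exact Hh'|].
  exfalso; apply (extremal_not_vertical _ q z h h' Hp); [lra|].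
  intros u Hu; right; exists h, h'; simpl; auto.
Qed.

Lemma extremal_hv_hull_mem A q z : extremal (hv_hull A) (q, z) -> A (q, z).
Proof.
  intros Hp; apply (extremal_conv2_mem _ (slice A z) q z Hp).
  - exact (extremal_hv_hull_slice A q z Hp).
  - intros u Hu; left; exact Hu.
Qed.

Lemma extremal_hv_hull_not_conv2_others A q z : extremal (hv_hull A) (q, z) ->
  ~ conv2 (fun u => A (u, z) /\ (u, z) <> (q, z)) q.
Proof.
  intros Hp Hq; apply (extremal_conv2_mem _ _ q z Hp Hq); [|reflexivity].
  intros u Hu; left; refine (conv2_mono _ (slice A z) u _ Hu).
  intros v [Av _]; exact Av.
Qed.

Lemma finite_max (L : list R) (P : R -> Prop) :
  (forall x, P x -> In x L) -> (exists x, P x) ->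
  exists m, P m /\ forall y, P y -> y <= m.
Proof.
  revert P; induction L as [|a L IH]; intros P HL [x Px]; [destruct (HL x Px)|].
  destruct (classic (exists y, P y /\ y <> a)) as [Hy|Hnone].
  - destruct (IH (fun u => P u /\ u <> a)) as [m [[Pm _] Hm]]; [|exact Hy|].
    { intros u [Pu Nu]; destruct (HL u Pu); [congruence|assumption]. }
    destruct (classic (P a /\ m < a)) as [[Pa Lt]|Hn].
    + exists a; split; [exact Pa|]; intros u Pu.
      destruct (Req_dec u a) as [->|Nu]; [lra|].
      specialize (Hm u (conj Pu Nu)); lra.
    + exists m; split; [exact Pm|]; intros u Pu.
      destruct (Req_dec u a) as [->|Nu]; [|apply Hm; auto].
      apply Rnot_lt_le; tauto.
  - exists x; split; [exact Px|]; intros y Py.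
    assert (Ex : x = a) by (apply NNPP; intros N; apply Hnone; eauto).
    assert (Ey : y = a) by (apply NNPP; intros N; apply Hnone; eauto).
    lra.
Qed.

Lemma finite_min (L : list R) (P : R -> Prop) :
  (forall x, P x -> In x L) -> (exists x, P x) ->
  exists m, P m /\ forall y, P y -> m <= y.
Proof.
  intros HL [x Px].
  destruct (finite_max (map Ropp L) (fun u => P (- u))) as [m [Pm Hm]].
  - intros u Pu; rewrite <- (Ropp_involutive u); apply in_map, HL, Pu.
  - exists (- x); rewrite Ropp_involutive; exact Px.
  - exists (- m); split; [exact Pm|]; intros y Py.
    assert (- y <= m) by (apply Hm; rewrite Ropp_involutive; exact Py); lra.
Qed.

Lemma consecutive_heights_below A L z h0 : (forall h, Hset A h -> In h L) ->
  Hset A h0 -> Hset A z -> h0 < z -> exists h, h0 <= h /\ consecutive_heights A h z.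
Proof.
  intros HL H0 Hz Hlt.
  destruct (finite_max L (fun h => Hset A h /\ h0 <= h < z)) as [h [[Hh Hb] Hmax]].
  - intros h [Hh _]; auto.
  - exists h0; split; [exact H0|lra].
  - exists h; repeat split; auto; try lra.
    intros [h'' [Hh'' Hb'']].
    assert (h'' <= h) by (apply Hmax; split; [exact Hh''|lra]); lra.
Qed.

Lemma consecutive_heights_above A L z h0 : (forall h, Hset A h -> In h L) ->
  Hset A h0 -> Hset A z -> z < h0 -> exists h, h <= h0 /\ consecutive_heights A z h.
Proof.
  intros HL H0 Hz Hlt.
  destruct (finite_min L (fun h => Hset A h /\ z < h <= h0)) as [h [[Hh Hb] Hmin]].
  - intros h [Hh _]; auto.
  - exists h0; split; [exact H0|lra].
  - exists h; repeat split; auto; try lra.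
    intros [h'' [Hh'' Hb'']].
    assert (h <= h'') by (apply Hmin; split; [exact Hh''|lra]); lra.
Qed.

Definition vertically_convex (A : pt3 -> Prop) : Prop :=
  forall a b h, A a -> A b -> proj a = proj b -> zc a <= h <= zc b ->
    Hset A h -> A (proj a, h).

Lemma extremal_hv_hull_no_vertical A L q z :
  (forall h, Hset A h -> In h L) -> vertically_convex A ->
  extremal (hv_hull A) (q, z) ->
  ~ (exists p1 p2, A p1 /\ A p2 /\ proj p1 = q /\ proj p2 = q /\ zc p1 < z < zc p2).
Proof.
  intros HL Hvc Hp [p1 [p2 [A1 [A2 [E1 [E2 [Lt1 Lt2]]]]]]].
  pose proof (extremal_hv_hull_mem A q z Hp) as Ap.
  assert (Hz : Hset A z) by (exists (q, z); auto).
  destruct (consecutive_heights_below A L z (zc p1)) as [h [Hh Hc]];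
    [exact HL|exists p1; auto|exact Hz|exact Lt1|].
  destruct (consecutive_heights_above A L z (zc p2)) as [h' [Hh' Hc']];
    [exact HL|exists p2; auto|exact Hz|exact Lt2|].
  pose proof Hc as [Hsh [_ [Hhz _]]]; pose proof Hc' as [_ [Hsh' [Hzh' _]]].
  assert (Ah : A (q, h)).
  { rewrite <- E1; apply (Hvc p1 (q, z)); simpl; auto; lra. }
  assert (Ah' : A (q, h')).
  { apply (Hvc (q, z) p2 h'); simpl; auto; lra. }
  apply (extremal_not_vertical _ q z h h' Hp); [lra|].
  intros u Hu; destruct (Rle_dec u z).
  - apply (hv_hull_column A q h z); auto; lra.
  - apply (hv_hull_column A q z h'); auto; lra.
Qed.

Lemma extremal_hv_hull_fin_extremal A L p :
  (forall h, Hset A h -> In h L) -> vertically_convex A ->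
  extremal (hv_hull A) p -> fin_extremal A p.
Proof.
  destruct p as [q z]; intros HL Hvc Hp; split; [|split].
  - exact (extremal_hv_hull_mem A q z Hp).
  - exact (extremal_hv_hull_no_vertical A L q z HL Hvc Hp).
  - exact (extremal_hv_hull_not_conv2_others A q z Hp).
Qed.

Lemma grid_vertically_convex K : vertically_convex (grid K).
Proof.
  intros a b h Ga _ _ _ [c [Gc <-]]; split; [exact (proj1 Ga)|exact (proj2 Gc)].
Qed.

Lemma vertically_convex_remove A p : vertically_convex A -> fin_extremal A p ->
  vertically_convex (fun q => A q /\ q <> p).
Proof.
  intros Hvc [_ [Hnv _]] a b h [Aa Na] [Ab Nb] Eab Hh [c [[Ac _] Ec]].
  split; [apply (Hvc a b); auto; exists c; auto|intros E].
  destruct (Req_dec h (zc a)) as [->|Ha].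
  { apply Na; rewrite <- E; destruct a; reflexivity. }
  destruct (Req_dec h (zc b)) as [->|Hb].
  { apply Nb; rewrite <- E, Eab; destruct b; reflexivity. }
  apply Hnv; exists a, b; rewrite <- E; simpl; repeat split; auto; lra.
Qed.

Lemma alg_set_vertically_convex K A : alg_set K A -> vertically_convex A.
Proof.
  induction 1; [apply grid_vertically_convex|apply vertically_convex_remove; assumption].
Qed.

Lemma alg_set_sub_grid K A : alg_set K A -> forall p, A p -> grid K p.
Proof. induction 1 as [|A p' _ IH _ _ _]; [auto|intros p [Ap _]; auto]. Qed.

Theorem lemma5p12 (K : pt3 -> Prop) (A : pt3 -> Prop) :
  finite3 K -> alg_set K A ->
  forall p, extremal (hv_hull A) p -> fin_extremal A p.
Proof.
  intros [l Hl] Halg p Hp.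
  apply (extremal_hv_hull_fin_extremal A (map zc l));
    [|exact (alg_set_vertically_convex K A Halg)|exact Hp].
  intros h [q [Aq <-]].
  destruct (alg_set_sub_grid K A Halg q Aq) as [_ [k [Kk <-]]].
  apply in_map, Hl, Kk.
Qed.
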